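(* Let $\Phi$ be a sound join doctrine dual to $\Psi^{\mathrm{op}}$ (so $\Psi=\Phi^*$). Then the functors $X\mapsto\Phi\mathbf{AlgLat}(X,2)$ and $A\mapsto\Psi^{\mathrm{op}}\mathbf{Inf}(A,2)$ (acting by precomposition) form a dual equivalence of categories between $\Phi\mathbf{AlgLat}$ and $\Psi^{\mathrm{op}}\mathbf{Inf}$. Moreover, $\Phi\mathbf{AlgLat}=\Phi\mathbf{CtsLat}$ (so that the same functors give a dual equivalence between $\Phi\mathbf{CtsLat}$ and $\Psi^{\mathrm{op}}\mathbf{Inf}$) iff $\omega\notin\Phi$, iff $\omega\in\Psi$.
   Context: A join doctrine is a class $\Phi$ of posets such that: (1) the one-element poset is in $\Phi$; (2) if a poset $P$ is the union of a set $\mathcal{S}$ of subposets each in $\Phi$ and $\mathcal{S}$ (ordered by inclusion) is in $\Phi$, then $P\in\Phi$; (3) if $f:P\to Q$ is monotone with cofinal image and $P\in\Phi$ then $Q\in\Phi$; (4) cofinal subposets of members of $\Phi$ are in $\Phi$. $\mathcal{L}(X)$ = lower subsets of a poset $X$; $\Phi(X)$ = those belonging (as subposets) to $\Phi$. $\Phi$-join = join of a subset in $\Phi$; $\Psi^{\mathrm{op}}$-meet = meet of a subset $S$ with $S^{\mathrm{op}}\in\Psi$. $\Phi$ is sound dual to $\Psi^{\mathrm{op}}$ if for all posets $X,Y$, $\phi\in\Phi(Y)$, $\psi\in\Psi(X)$, monotone $F:X^{\mathrm{op}}\times Y\to2$: $\bigwedge_{x\in\psi}\bigvee_{y\in\phi}F=\bigvee_{y\in\phi}\bigwedge_{x\in\psi}F$,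 and for every $X$ the closure of $\Psi(X)$ in $\mathcal{L}(X)$ under unions of subfamilies belonging to $\Phi$ is $\mathcal{L}(X)$. In a complete lattice: $\Downarrow x=\bigcap\{\phi\in\Phi(X)\mid x\le\bigvee\phi\}$, $x$ $\Phi$-compact iff $x\in\Downarrow x$; $\Phi$-algebraic lattice: complete lattice generated under $\Phi$-joins by its $\Phi$-compact elements; $\Phi$-continuous lattice: complete lattice where each $x$ has $\phi\in\Phi(X)$ with $\phi\subseteq\Downarrow x$, $x\le\bigvee\phi$. $\Phi\mathbf{CtsLat}$ = $\Phi$-continuous lattices with maps preserving arbitrary meets and $\Phi$-joins; $\Phi\mathbf{AlgLat}$ its full subcategory of $\Phi$-algebraic lattices. $\Psi^{\mathrm{op}}\mathbf{Inf}$ = posets with all $\Psi^{\mathrm{op}}$-meets and maps preserving them. $2=\{0<1\}$; hom-sets carry the pointwise order. $\omega$ = naturals. *)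

From Stdlib Require Import Arith.

Definition rel (T : Type) := T -> T -> Prop.

Record is_poset (T : Type) (le : rel T) : Prop := {
  po_refl : forall x, le x x;
  po_trans : forall x y z, le x y -> le y z -> le x z;
  po_antisym : forall x y, le x y -> le y x -> x = y }.
Arguments is_poset {T} le.

(* A class of posets. *)
Definition Doctrine := forall T : Type, rel T -> Prop.

Definition opp {T : Type} (le : rel T) : rel T := fun x y => le y x.

Definition sub_le {T : Type} (le : rel T) (S : T -> Prop) : rel {x : T | S x} :=
  fun a b => le (proj1_sig a) (proj1_sig b).

Definition inD (D : Doctrine) {T : Type} (le : rel T) (S : T -> Prop) : Prop :=
  D {x : T | S x} (sub_le le S).

Definition lower {T : Type} (le : rel T) (S : T -> Prop) : Prop :=
  forall x y, le x y -> S y -> S x.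

Definition DX (D : Doctrine) {T : Type} (le : rel T) (S : T -> Prop) : Prop :=
  lower le S /\ inD D le S.

Definition incl {T : Type} : rel (T -> Prop) := fun A B => forall x, A x -> B x.

Definition unit_le : rel unit := fun _ _ => True.

Definition join_doctrine (D : Doctrine) : Prop :=
  D unit unit_le /\
  (forall (T : Type) (le : rel T), is_poset le ->
     forall SS : (T -> Prop) -> Prop,
       (forall x, exists A, SS A /\ A x) ->
       (forall A, SS A -> inD D le A) ->
       inD D (@incl T) SS ->
       D T le) /\
  (forall (P : Type) (leP : rel P) (Q : Type) (leQ : rel Q) (f : P -> Q),
     is_poset leP -> is_poset leQ ->
     (forall x y, leP x y -> leQ (f x) (f y)) ->
     (forall q, exists p, leQ q (f p)) ->
     D P leP -> D Q leQ) /\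
  (forall (T : Type) (le : rel T) (S : T -> Prop), is_poset le ->
     (forall x, exists y, S y /\ le x y) ->
     D T le -> inD D le S).

Definition is_lub {T : Type} (le : rel T) (S : T -> Prop) (j : T) : Prop :=
  (forall x, S x -> le x j) /\ (forall u, (forall x, S x -> le x u) -> le j u).

Definition is_glb {T : Type} (le : rel T) (S : T -> Prop) (m : T) : Prop :=
  (forall x, S x -> le m x) /\ (forall u, (forall x, S x -> le u x) -> le u m).

Definition img {T U : Type} (f : T -> U) (S : T -> Prop) : U -> Prop :=
  fun y => exists x, S x /\ f x = y.

Definition complete_lattice {T : Type} (le : rel T) : Prop :=
  is_poset le /\ forall S : T -> Prop, exists j, is_lub le S j.

Definition below_join {T : Type} (le : rel T) (phi : T -> Prop) (x : T) : Prop :=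
  exists j, is_lub le phi j /\ le x j.

Definition dwa (D : Doctrine) {T : Type} (le : rel T) (x y : T) : Prop :=
  forall phi : T -> Prop, DX D le phi -> below_join le phi x -> phi y.

Definition compact (D : Doctrine) {T : Type} (le : rel T) (x : T) : Prop :=
  dwa D le x x.

Definition D_join_closed (D : Doctrine) {T : Type} (le : rel T) (C : T -> Prop) : Prop :=
  forall (S : T -> Prop) (j : T), inD D le S -> (forall x, S x -> C x) ->
    is_lub le S j -> C j.

Definition phi_algebraic (D : Doctrine) {T : Type} (le : rel T) : Prop :=
  complete_lattice le /\
  forall C : T -> Prop, (forall x, compact D le x -> C x) -> D_join_closed D le C ->
    forall x, C x.

Definition phi_continuous (D : Doctrine) {T : Type} (le : rel T) : Prop :=
  complete_lattice le /\
  forall x, exists phi : T -> Prop,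
    DX D le phi /\ (forall y, phi y -> dwa D le x y) /\ below_join le phi x.

(* Morphisms of Phi CtsLat / Phi AlgLat: preserve arbitrary meets and Phi-joins. *)
Definition phi_hom (D : Doctrine) {X Y : Type} (leX : rel X) (leY : rel Y) (f : X -> Y) : Prop :=
  (forall S m, is_glb leX S m -> is_glb leY (img f S) (f m)) /\
  (forall S j, inD D leX S -> is_lub leX S j -> is_lub leY (img f S) (f j)).

(* Objects of Psi^op Inf: posets with all Psi^op-meets (meets of S with S^op in Psi). *)
Definition psiop_inf (D : Doctrine) {T : Type} (le : rel T) : Prop :=
  is_poset le /\ forall S : T -> Prop, inD D (opp le) S -> exists m, is_glb le S m.

(* Morphisms of Psi^op Inf: preserve Psi^op-meets. *)
Definition psiop_hom (D : Doctrine) {A B : Type} (leA : rel A) (leB : rel B) (g : A -> B) : Prop :=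
  forall S m, inD D (opp leA) S -> is_glb leA S m -> is_glb leB (img g S) (g m).

Definition le2 : rel bool := fun a b => a = true -> b = true.

(* Hom-sets into 2, with the pointwise order. *)
Definition Hom {T : Type} (P : (T -> bool) -> Prop) : Type := {f : T -> bool | P f}.

Definition leHom {T : Type} (P : (T -> bool) -> Prop) : rel (Hom P) :=
  fun h k => forall x, le2 (proj1_sig h x) (proj1_sig k x).

Definition is_iso (H : forall X Y : Type, rel X -> rel Y -> (X -> Y) -> Prop)
  {X Y : Type} (leX : rel X) (leY : rel Y) (f : X -> Y) : Prop :=
  H X Y leX leY f /\
  exists g : Y -> X, H Y X leY leX g /\ (forall x, g (f x) = x) /\ (forall y, f (g y) = y).

(* Phi is sound dual to Psi^op. Meets/joins in 2 are written out:
   a meet in 2 is true iff all entries are true, a join iff some entry is. *)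
Definition sound_dual (Phi Psi : Doctrine) : Prop :=
  (forall (X : Type) (leX : rel X) (Y : Type) (leY : rel Y),
     is_poset leX -> is_poset leY ->
     forall (phi : Y -> Prop) (psi : X -> Prop), DX Phi leY phi -> DX Psi leX psi ->
     forall F : X -> Y -> bool,
       (* monotone on X^op x Y *)
       (forall x x' y y', leX x' x -> leY y y' -> le2 (F x y) (F x' y')) ->
       ((forall x, psi x -> exists y, phi y /\ F x y = true) <->
        (exists y, phi y /\ forall x, psi x -> F x y = true))) /\
  (forall (X : Type) (leX : rel X), is_poset leX ->
     forall C : (X -> Prop) -> Prop,
       (forall L, DX Psi leX L -> C L) ->
       (forall AA : (X -> Prop) -> Prop,
          (forall L, AA L -> lower leX L /\ C L) -> inD Phi (@incl X) AA ->
          C (fun x => exists L, AA L /\ L x)) ->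
       forall L, lower leX L -> C L).

(* Maps X -> 2 preserving meets and Phi-joins are the indicators of the principal filters
   of the Phi-compact elements of X; maps A -> 2 preserving Psi^op-meets are the up-sets of A
   closed under those meets. In both hom-sets meets are pointwise, and so are Phi-joins, by the
   interchange law of soundness. The closure clause of soundness, applied to A^op, shows that
   Psi^op Inf(A,2) is generated under Phi-joins by the principal filters, which are its compact
   elements, so it is Phi-algebraic and A is recovered by evaluation; applied to the poset of
   compact elements of X, it shows that every Psi^op-meet-preserving map on Phi AlgLat(X,2) is
   evaluation at the join of its support.
   If omega is not in Phi, the closure clause applied to omega puts omega in Psi, as a
   Phi-family of proper initial segments covering omega would map cofinally onto omega. Then
   interpolation yields, for y << x, a chain y = a_0 << a_1 << ... << x whose join is compact
   by interchange over omega, so Phi-continuous lattices are Phi-algebraic. If omega is in Phi,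
   [0,1] is Phi-continuous but not Phi-algebraic, and omega is not in Psi because interchange
   fails for <= on omega x omega. *)

From Stdlib Require Import Reals Lra.
From Stdlib Require Import Classical ClassicalEpsilon FunctionalExtensionality
  PropExtensionality ProofIrrelevance Bool Wf_nat Arith Lia.

Arguments po_refl {T le} _ x.
Arguments po_trans {T le} _ x y z _ _.
Arguments po_antisym {T le} _ x y _ _.

Definition asbool (P : Prop) : bool :=
  if excluded_middle_informative P then true else false.

Arguments asbool : simpl never.

Lemma asboolE (P : Prop) : asbool P = true <-> P.
Proof.
  unfold asbool; destruct (excluded_middle_informative P); split; auto; discriminate.
Qed.

Lemma Hom_ext {T} (P : (T -> bool) -> Prop) (h k : Hom P) :
  (forall x, proj1_sig h x = proj1_sig k x) -> h = k.
Proof.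
  destruct h as [h ph], k as [k pk]; simpl; intros E.
  assert (h = k) as <- by (apply functional_extensionality; exact E).
  f_equal; apply proof_irrelevance.
Qed.

Lemma is_glb_le2_img {T} (f : T -> bool) (S : T -> Prop) b :
  is_glb le2 (img f S) b <-> (b = true <-> forall x, S x -> f x = true).
Proof.
  unfold is_glb, img, le2; split.
  - intros [Hlow Hgreat]; split.
    + intros Hb x Sx. apply (Hlow (f x)); eauto.
    + intros H. apply (Hgreat true); auto. intros c [x [Sx <-]] _. auto.
  - intros H; split.
    + intros c [x [Sx <-]] Hb. apply H; auto.
    + intros u Hu Hut. apply H. intros x Sx. apply (Hu (f x)); eauto.
Qed.

Lemma is_lub_le2_img {T} (f : T -> bool) (S : T -> Prop) b :
  is_lub le2 (img f S) b <-> (b = true <-> exists x, S x /\ f x = true).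
Proof.
  unfold is_lub, img, le2; split.
  - intros [Hup Hleast]; split.
    + intros Hb. apply NNPP; intros N.
      enough (false = true) by discriminate.
      apply (Hleast false); auto. intros c [x [Sx <-]] Hc. exfalso; eauto.
    + intros [x [Sx Hx]]. apply (Hup (f x)); eauto.
  - intros H; split.
    + intros c [x [Sx <-]] Hc. apply H; eauto.
    + intros u Hu Hb. apply H in Hb as [x [Sx Hx]]. apply (Hu (f x)); eauto.
Qed.

Lemma sub_le_poset {T} (le : rel T) S : is_poset le -> is_poset (sub_le le S).
Proof.
  intros [R Tr A]; split; unfold sub_le; eauto.
  intros [x px] [y py]; simpl; intros H1 H2.
  assert (x = y) as <- by auto. f_equal; apply proof_irrelevance.
Qed.

Lemma incl_poset T : is_poset (@incl T).
Proof.
  split; unfold incl; eauto.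
  intros A B H1 H2. apply functional_extensionality; intros x.
  apply propositional_extensionality; split; auto.
Qed.

Lemma opp_poset {T} (le : rel T) : is_poset le -> is_poset (opp le).
Proof. intros [R Tr A]; split; unfold opp; eauto. Qed.

Lemma leHom_poset {T} (P : (T -> bool) -> Prop) : is_poset (leHom P).
Proof.
  split; unfold leHom, le2; eauto.
  intros h k H1 H2. apply Hom_ext; intros x. apply eq_true_iff_eq; split; auto.
Qed.

Lemma nat_le_poset : is_poset Peano.le.
Proof. split; intros; lia. Qed.

Lemma unit_le_poset : is_poset unit_le.
Proof. split; unfold unit_le; auto. intros [] [] _ _; auto. Qed.

Lemma is_lub_unique {T} (le : rel T) S j j' :
  is_poset le -> is_lub le S j -> is_lub le S j' -> j = j'.
Proof. intros P [Hj1 Hj2] [Hj1' Hj2']. apply (po_antisym P); auto. Qed.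

Lemma is_glb_unique {T} (le : rel T) S m m' :
  is_poset le -> is_glb le S m -> is_glb le S m' -> m = m'.
Proof. intros P [Hm1 Hm2] [Hm1' Hm2']. apply (po_antisym P); auto. Qed.

Lemma complete_lattice_glb {T} (le : rel T) :
  complete_lattice le -> forall S, exists m, is_glb le S m.
Proof.
  intros [_ Hlub] S. destruct (Hlub (fun u => forall x, S x -> le u x)) as [m [Hm1 Hm2]].
  exists m; split; auto.
Qed.

Definition sup {T} (le : rel T) (H : complete_lattice le) (S : T -> Prop) : T :=
  proj1_sig (constructive_indefinite_description _ (proj2 H S)).

Lemma is_lub_sup {T} (le : rel T) H S : is_lub le S (sup le H S).
Proof. exact (proj2_sig (constructive_indefinite_description _ (proj2 H S))). Qed.

Lemma is_lub_principal {T} (le : rel T) x :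
  is_poset le -> is_lub le (fun y => le y x) x.
Proof. intros P; split; auto. intros u Hu. apply Hu, (po_refl P). Qed.

Lemma img_comp {X Y Z} (f : X -> Y) (g : Y -> Z) S :
  img g (img f S) = img (fun x => g (f x)) S.
Proof.
  apply functional_extensionality; intros z. apply propositional_extensionality.
  unfold img; split.
  - intros [y [[x [Sx <-]] <-]]. eauto.
  - intros [x [Sx <-]]. eauto.
Qed.

Lemma phi_hom_monotone (D : Doctrine) {X Y} (leX : rel X) (leY : rel Y) f :
  is_poset leX -> phi_hom D leX leY f -> forall x y, leX x y -> leY (f x) (f y).
Proof.
  intros PX [Hmeet _] x y Hxy.
  assert (Hpair : is_glb leX (fun z => z = x \/ z = y) x).
  { split.
    - intros z [-> | ->]; auto. apply (po_refl PX).
    - intros u Hu. apply Hu; auto. }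
  apply (Hmeet _ _ Hpair). exists y; auto.
Qed.

Section Doctrine.
Variable D : Doctrine.
Hypothesis HD : join_doctrine D.

Lemma D_cofinal_image {P Q} (leP : rel P) (leQ : rel Q) (f : P -> Q) :
  is_poset leP -> is_poset leQ -> (forall x y, leP x y -> leQ (f x) (f y)) ->
  (forall q, exists p, leQ q (f p)) -> D P leP -> D Q leQ.
Proof. exact (proj1 (proj2 (proj2 HD)) P leP Q leQ f). Qed.

Lemma inD_cofinal_image {P Q} (leP : rel P) (le : rel Q) (f : P -> Q) (S : Q -> Prop) :
  is_poset leP -> is_poset le -> (forall x y, leP x y -> le (f x) (f y)) ->
  (forall x, S (f x)) -> (forall y, S y -> exists x, le y (f x)) -> D P leP -> inD D le S.
Proof.
  intros PP PQ Hmono HS Hcof. unfold inD.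
  apply (D_cofinal_image leP (sub_le le S) (fun x => exist _ (f x) (HS x))); auto.
  - apply sub_le_poset; auto.
  - intros [q qs]. exact (Hcof q qs).
Qed.

Lemma inD_map {T Q} (le : rel T) (S : T -> Prop) (leQ : rel Q) (f : T -> Q) (S' : Q -> Prop) :
  is_poset le -> is_poset leQ -> (forall x y, S x -> S y -> le x y -> leQ (f x) (f y)) ->
  (forall x, S x -> S' (f x)) -> (forall q, S' q -> exists x, S x /\ leQ q (f x)) ->
  inD D le S -> inD D leQ S'.
Proof.
  intros PT PQ Hmono HS Hcof H.
  apply (inD_cofinal_image (sub_le le S) leQ (fun x => f (proj1_sig x))); auto.
  - apply sub_le_poset; auto.
  - intros [x px] [y py]; unfold sub_le; simpl; auto.
  - intros [x px]; simpl; auto.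
  - intros q Hq. destruct (Hcof q Hq) as [x [Sx Hx]]. exists (exist _ x Sx). exact Hx.
Qed.

Lemma inD_image {X Y} (leX : rel X) (leY : rel Y) (f : X -> Y) (S : X -> Prop) :
  is_poset leX -> is_poset leY -> (forall x y, S x -> S y -> leX x y -> leY (f x) (f y)) ->
  inD D leX S -> inD D leY (img f S).
Proof.
  intros PX PY Hmono. apply (inD_map leX S leY f); auto.
  - intros x Sx; exists x; auto.
  - intros q [x [Sx <-]]. exists x; split; auto. apply (po_refl PY).
Qed.

Lemma inD_full {T} (le : rel T) : is_poset le -> D T le -> inD D le (fun _ => True).
Proof.
  intros P. apply (inD_cofinal_image le le (fun x => x)); auto.
  intros y _; exists y; apply (po_refl P).
Qed.

Lemma D_of_inD_full {T} (le : rel T) : is_poset le -> inD D le (fun _ => True) -> D T le.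
Proof.
  intros P. apply (D_cofinal_image (sub_le le _) le (@proj1_sig _ _)); auto.
  - apply sub_le_poset; auto.
  - intros q. exists (exist _ q I). apply (po_refl P).
Qed.

Lemma inD_superset {T} (le : rel T) (S S' : T -> Prop) : is_poset le -> inD D le S ->
  (forall x, S x -> S' x) -> (forall x, S' x -> exists y, S y /\ le x y) -> inD D le S'.
Proof. intros P H Sub Hcof. apply (inD_map le S le (fun x => x) S'); auto. Qed.

Lemma inD_ext {T} (le : rel T) (S S' : T -> Prop) : is_poset le -> inD D le S ->
  (forall x, S x <-> S' x) -> inD D le S'.
Proof.
  intros P H E. apply (inD_superset le S); auto.
  - intros x; apply E.
  - intros x Hx; exists x; split; [apply E; auto | apply (po_refl P)].
Qed.

Lemma inD_cofinal_subset {T} (le : rel T) (S S' : T -> Prop) : is_poset le -> inD D le S' ->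
  (forall x, S x -> S' x) -> (forall x, S' x -> exists y, S y /\ le x y) -> inD D le S.
Proof.
  intros P H Sub Hcof. set (S0 := fun t : {x | S' x} => S (proj1_sig t)).
  assert (H0 : inD D (sub_le le S') S0).
  { apply (proj2 (proj2 (proj2 HD))); auto using sub_le_poset.
    intros [x px]. destruct (Hcof x px) as [y [Sy Hy]].
    exists (exist _ y (Sub y Sy)); auto. }
  apply (inD_cofinal_image (sub_le (sub_le le S') S0) le (fun t => proj1_sig (proj1_sig t)));
    auto using sub_le_poset.
  - intros [[x px] qx]; auto.
  - intros y Sy. exists (exist S0 (exist _ y (Sub y Sy)) Sy). apply (po_refl P).
Qed.

Lemma inD_with_max {T} (le : rel T) (S : T -> Prop) t : is_poset le -> S t ->
  (forall x, S x -> le x t) -> inD D le S.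
Proof.
  intros P St Ht.
  apply (inD_cofinal_image unit_le le (fun _ => t)).
  - exact unit_le_poset.
  - exact P.
  - intros; apply (po_refl P).
  - intros; exact St.
  - intros y Sy; exists tt; auto.
  - exact (proj1 HD).
Qed.

Lemma DX_full {T} (le : rel T) S :
  is_poset le -> inD D le S -> DX D (sub_le le S) (fun _ => True).
Proof.
  intros P H; split.
  - intros x y _ _; auto.
  - apply inD_full; auto using sub_le_poset.
Qed.

Lemma inD_union {T} (le : rel T) (FF : (T -> Prop) -> Prop) : is_poset le ->
  (forall A, FF A -> inD D le A) -> inD D (@incl T) FF ->
  inD D le (fun x => exists A, FF A /\ A x).
Proof.
  intros P HA HF. set (U := fun x => exists A, FF A /\ A x).
  set (trace := fun (A : T -> Prop) (t : {x | U x}) => A (proj1_sig t)).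
  apply (proj1 (proj2 HD) _ (sub_le le U) (sub_le_poset le U P) (img trace FF)).
  - intros [x [A [FA Ax]]]. exists (trace A); split; [exists A; auto | exact Ax].
  - intros B [A [FA <-]].
    assert (UA : forall x, A x -> U x) by (intros x Ax; exists A; auto).
    apply (inD_cofinal_image (sub_le le A) (sub_le le U)
             (fun a => exist U (proj1_sig a) (UA _ (proj2_sig a))));
      auto using sub_le_poset.
    + intros [x px]; exact px.
    + intros [x ux] Ax. exists (exist _ x Ax). apply (po_refl P).
    + exact (HA A FA).
  - apply (inD_image incl incl); auto using incl_poset.
    intros A B _ _ HAB t; apply HAB.
Qed.

Lemma psiop_hom_monotone {X Y} (leX : rel X) (leY : rel Y) f :
  is_poset leX -> psiop_hom D leX leY f -> forall x y, leX x y -> leY (f x) (f y).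
Proof.
  intros PX Hf x y Hxy.
  assert (Hpair : is_glb leX (fun z => z = x \/ z = y) x).
  { split.
    - intros z [-> | ->]; auto. apply (po_refl PX).
    - intros u Hu. apply Hu; auto. }
  assert (Ipair : inD D (opp leX) (fun z => z = x \/ z = y)).
  { apply (inD_with_max _ _ x); auto using opp_poset.
    intros z [-> | ->]; unfold opp; auto. apply (po_refl PX). }
  apply (Hf _ _ Ipair Hpair). exists y; auto.
Qed.

Lemma phi_hom_comp {X Y Z} (leX : rel X) (leY : rel Y) (leZ : rel Z) f g :
  is_poset leX -> is_poset leY -> phi_hom D leX leY f -> phi_hom D leY leZ g ->
  phi_hom D leX leZ (fun x => g (f x)).
Proof.
  intros PX PY Hf Hg. split.
  - intros S m Hm. rewrite <- img_comp. apply Hg, Hf, Hm.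
  - intros S j HS Hj. rewrite <- img_comp. apply Hg; [|apply Hf; auto].
    apply (inD_image leX leY); auto.
    intros x y _ _; apply (phi_hom_monotone D leX leY f PX Hf).
Qed.

Lemma psiop_hom_comp {X Y Z} (leX : rel X) (leY : rel Y) (leZ : rel Z) f g :
  is_poset leX -> is_poset leY -> psiop_hom D leX leY f -> psiop_hom D leY leZ g ->
  psiop_hom D leX leZ (fun x => g (f x)).
Proof.
  intros PX PY Hf Hg S m HS Hm. rewrite <- img_comp. apply Hg; [|apply Hf; auto].
  apply (inD_image (opp leX) (opp leY)); auto using opp_poset.
  intros x y _ _; apply (psiop_hom_monotone leX leY f PX Hf).
Qed.

Lemma dwa_lower {T} (le : rel T) x : lower le (dwa D le x).
Proof. intros y y' Hy Hy' phi Hphi Hb. apply (proj1 Hphi y y' Hy), Hy'; auto. Qed.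

Lemma dwa_mono {T} (le : rel T) x x' y :
  is_poset le -> le x x' -> dwa D le x y -> dwa D le x' y.
Proof.
  intros P Hx H phi Hphi [j [Hj Hxj]]. apply H; auto.
  exists j; split; auto. apply (po_trans P _ x'); auto.
Qed.

Lemma dwa_le {T} (le : rel T) x y : is_poset le -> dwa D le x y -> le y x.
Proof.
  intros P H. apply (H (fun z => le z x)).
  - split.
    + intros a b Hab Hb. apply (po_trans P _ b); auto.
    + apply (inD_with_max _ _ x P); auto. apply (po_refl P).
  - exists x; split; [apply is_lub_principal; auto | apply (po_refl P)].
Qed.

Lemma compact_below_member {T} (le : rel T) k S j :
  is_poset le -> compact D le k -> inD D le S -> is_lub le S j -> le k j ->
  exists s, S s /\ le k s.
Proof.
  intros P Hk HS [Hj1 Hj2] Hkj. apply (Hk (fun y => exists s, S s /\ le y s)).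
  - split.
    + intros x y Hxy [s [Ss Hs]]. exists s; split; auto. apply (po_trans P _ y); auto.
    + apply (inD_superset le S); auto.
      intros x Sx. exists x; split; auto. apply (po_refl P).
  - exists j; split; auto. split.
    + intros y [s [Ss Hs]]. apply (po_trans P _ s); auto.
    + intros u Hu. apply Hj2. intros x Sx. apply Hu. exists x; split; auto. apply (po_refl P).
Qed.

Lemma least_continuity_witness {T} (le : rel T) z : is_poset le -> (forall y, le z y) ->
  exists phi, DX D le phi /\ (forall y, phi y -> dwa D le z y) /\ below_join le phi z.
Proof.
  intros P Hz. destruct (classic (compact D le z)) as [Hc | Hnc].
  - exists (fun y => le y z). split; [split | split].
    + intros a b Hab Hb. apply (po_trans P _ b); auto.
    + apply (inD_with_max _ _ z); auto.
    + intros y Hy. apply (dwa_lower le z y z); auto.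
    + exists z; split; [apply is_lub_principal | apply (po_refl P)]; auto.
  - (* a witness of non-compactness of the least element is empty *)
    apply not_all_ex_not in Hnc as [psi Hpsi].
    apply imply_to_and in Hpsi as [Dpsi Hpsi]. apply imply_to_and in Hpsi as [Bpsi Npsi].
    exists psi. split; [auto | split; auto].
    intros y py. exfalso. apply Npsi, (proj1 Dpsi z y); auto.
Qed.

Lemma compact_generator {T} (le : rel T) (B : T -> Prop) k : is_poset le ->
  (forall C, (forall b, B b -> C b) -> D_join_closed D le C -> forall x, C x) ->
  compact D le k -> B k.
Proof.
  intros P Hgen Hk.
  assert (Hk' : le k k -> exists b, B b /\ le k b /\ le b k).
  { apply (Hgen (fun x => le k x -> exists b, B b /\ le k b /\ le b x)).
    - intros b Bb Hkb. exists b; split; [|split]; auto. apply (po_refl P).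
    - intros S j HS HC Hj Hkj.
      destruct (compact_below_member le k S j P Hk HS Hj Hkj) as [s [Ss Hks]].
      destruct (HC s Ss Hks) as [b [Bb [Hkb Hbs]]].
      exists b; split; [|split]; auto. apply (po_trans P _ s); auto. apply Hj; auto. }
  destruct (Hk' (po_refl P k)) as [b [Bb [Hkb Hbk]]].
  rewrite (po_antisym P k b); auto.
Qed.

(* A proper lower set of [nat] is an initial segment [[0, n)]; [n] depends monotonically on
   the set and is unbounded along a cover. *)
Lemma nat_of_proper_lower_cover (AA : (nat -> Prop) -> Prop) :
  (forall A, AA A -> lower Peano.le A /\ exists n, ~ A n) ->
  (forall q, exists A, AA A /\ A q) -> inD D (@incl nat) AA -> D nat Peano.le.
Proof.
  intros Hproper Hcover HAA.
  assert (Hlen : forall a : {A | AA A},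
             exists n, ~ proj1_sig a n /\ forall m, ~ proj1_sig a m -> n <= m).
  { intros [A AA0]; simpl. destruct (proj2 (Hproper A AA0)) as [n0 Hn0].
    destruct (dec_inh_nat_subset_has_unique_least_element (fun n => ~ A n))
      as [n [[Hn Hmin] _]]; eauto using classic. }
  destruct (choice _ Hlen) as [len Hlen'].
  apply (D_cofinal_image (sub_le incl AA) Peano.le len);
    auto using sub_le_poset, incl_poset, nat_le_poset.
  - intros a b Hab. apply (proj2 (Hlen' a)). intros Ha. apply (proj1 (Hlen' b)), Hab, Ha.
  - intros q. destruct (Hcover q) as [A [AA0 Aq]]. exists (exist _ A AA0).
    destruct (le_lt_dec q (len (exist _ A AA0))) as [Hq | Hq]; auto.
    exfalso. apply (proj1 (Hlen' (exist _ A AA0))), (proj1 (Hproper A AA0) _ q); auto. lia.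
Qed.

End Doctrine.

Lemma phi_hom_2_meet (D : Doctrine) {X} (leX : rel X) (h : X -> bool) S m :
  phi_hom D leX le2 h -> is_glb leX S m -> (h m = true <-> forall x, S x -> h x = true).
Proof. intros Hh Hm. apply is_glb_le2_img, (proj1 Hh), Hm. Qed.

Lemma phi_hom_2_join (D : Doctrine) {X} (leX : rel X) (h : X -> bool) S j :
  phi_hom D leX le2 h -> inD D leX S -> is_lub leX S j ->
  (h j = true <-> exists x, S x /\ h x = true).
Proof. intros Hh HS Hj. apply is_lub_le2_img, (proj2 Hh); auto. Qed.

Lemma psiop_hom_2_meet (D : Doctrine) {X} (leX : rel X) (h : X -> bool) S m :
  psiop_hom D leX le2 h -> inD D (opp leX) S -> is_glb leX S m ->
  (h m = true <-> forall x, S x -> h x = true).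
Proof. intros Hh HS Hm. apply is_glb_le2_img, Hh; auto. Qed.

Definition chi_up {T} (le : rel T) (a x : T) : bool := asbool (le a x).

Lemma chi_up_is_glb {T} (le : rel T) a S m : is_poset le ->
  is_glb le S m -> is_glb le2 (img (chi_up le a) S) (chi_up le a m).
Proof.
  intros P [Hm1 Hm2]. apply is_glb_le2_img. unfold chi_up. setoid_rewrite asboolE. split.
  - intros Ham x Sx. apply (po_trans P _ m); auto.
  - intros H. apply Hm2; auto.
Qed.

Lemma chi_up_psiop_hom (D : Doctrine) {T} (le : rel T) a :
  is_poset le -> psiop_hom D le le2 (chi_up le a).
Proof. intros P S m _ Hm. apply chi_up_is_glb; auto. Qed.

Definition pmeet {T} {P : (T -> bool) -> Prop} (S : Hom P -> Prop) (x : T) : bool :=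
  asbool (forall h, S h -> proj1_sig h x = true).

Definition pjoin {T} {P : (T -> bool) -> Prop} (S : Hom P -> Prop) (x : T) : bool :=
  asbool (exists h, S h /\ proj1_sig h x = true).

Lemma pmeet_is_glb {T} (P : (T -> bool) -> Prop) S (HS : P (pmeet S)) :
  is_glb (leHom P) S (exist _ (pmeet S) HS).
Proof.
  unfold is_glb, leHom, le2, pmeet; simpl. split.
  - intros h Sh x. rewrite asboolE. auto.
  - intros u Hu x Hux. apply asboolE. intros h Sh. exact (Hu h Sh x Hux).
Qed.

Lemma pjoin_is_lub {T} (P : (T -> bool) -> Prop) S (HS : P (pjoin S)) :
  is_lub (leHom P) S (exist _ (pjoin S) HS).
Proof.
  unfold is_lub, leHom, le2, pjoin; simpl. split.
  - intros h Sh x Hx. apply asboolE. eauto.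
  - intros u Hu x. rewrite asboolE. intros [h [Sh Hh]]. exact (Hu h Sh x Hh).
Qed.

Lemma is_glb_pointwise {T} (P : (T -> bool) -> Prop) S m : P (pmeet S) ->
  is_glb (leHom P) S m -> forall x, proj1_sig m x = true <-> forall h, S h -> proj1_sig h x = true.
Proof.
  intros HS Hm. rewrite (is_glb_unique _ S m _ (leHom_poset P) Hm (pmeet_is_glb P S HS)).
  intros x; apply asboolE.
Qed.

Lemma is_lub_pointwise {T} (P : (T -> bool) -> Prop) S j : P (pjoin S) ->
  is_lub (leHom P) S j -> forall x, proj1_sig j x = true <-> exists h, S h /\ proj1_sig h x = true.
Proof.
  intros HS Hj. rewrite (is_lub_unique _ S j _ (leHom_poset P) Hj (pjoin_is_lub P S HS)).
  intros x; apply asboolE.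
Qed.

Lemma precomp_is_glb {T U} (P : (T -> bool) -> Prop) (Q : (U -> bool) -> Prop) (f : U -> T)
  (Hc : forall h : Hom P, Q (fun u => proj1_sig h (f u))) S m :
  (forall x, proj1_sig m x = true <-> forall h, S h -> proj1_sig h x = true) ->
  is_glb (leHom Q) (img (fun h => exist _ (fun u => proj1_sig h (f u)) (Hc h)) S)
    (exist _ (fun u => proj1_sig m (f u)) (Hc m)).
Proof.
  unfold is_glb, leHom, le2; simpl. intros E. split.
  - intros c [h [Sh <-]] u; simpl. rewrite E. auto.
  - intros v Hv u Hvu. apply E. intros h Sh.
    exact (Hv _ (ex_intro _ h (conj Sh eq_refl)) u Hvu).
Qed.

Lemma precomp_is_lub {T U} (P : (T -> bool) -> Prop) (Q : (U -> bool) -> Prop) (f : U -> T)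
  (Hc : forall h : Hom P, Q (fun u => proj1_sig h (f u))) S j :
  (forall x, proj1_sig j x = true <-> exists h, S h /\ proj1_sig h x = true) ->
  is_lub (leHom Q) (img (fun h => exist _ (fun u => proj1_sig h (f u)) (Hc h)) S)
    (exist _ (fun u => proj1_sig j (f u)) (Hc j)).
Proof.
  unfold is_lub, leHom, le2; simpl. intros E. split.
  - intros c [h [Sh <-]] u Hu; simpl. apply E. eauto.
  - intros v Hv u Hju. apply E in Hju as [h [Sh Hh]].
    exact (Hv _ (ex_intro _ h (conj Sh eq_refl)) u Hh).
Qed.

Lemma order_iso_is_glb {X Y} (leX : rel X) (leY : rel Y) (f : X -> Y) :
  (forall y, exists x, f x = y) -> (forall x x', leX x x' <-> leY (f x) (f x')) ->
  forall S m, is_glb leX S m -> is_glb leY (img f S) (f m).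
Proof.
  intros Hsurj Hemb S m [Hm1 Hm2]; split.
  - intros c [x [Sx <-]]. apply Hemb; auto.
  - intros u Hu. destruct (Hsurj u) as [x <-]. apply Hemb, Hm2.
    intros y Sy. apply Hemb, Hu. exists y; auto.
Qed.

Lemma order_iso_is_lub {X Y} (leX : rel X) (leY : rel Y) (f : X -> Y) :
  (forall y, exists x, f x = y) -> (forall x x', leX x x' <-> leY (f x) (f x')) ->
  forall S j, is_lub leX S j -> is_lub leY (img f S) (f j).
Proof.
  intros Hsurj Hemb S j [Hj1 Hj2]; split.
  - intros c [x [Sx <-]]. apply Hemb; auto.
  - intros u Hu. destruct (Hsurj u) as [x <-]. apply Hemb, Hj2.
    intros y Sy. apply Hemb, Hu. exists y; auto.
Qed.

Lemma order_iso_phi_hom (D : Doctrine) {X Y} (leX : rel X) (leY : rel Y) (f : X -> Y) :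
  (forall y, exists x, f x = y) -> (forall x x', leX x x' <-> leY (f x) (f x')) ->
  phi_hom D leX leY f.
Proof.
  intros Hsurj Hemb. split.
  - apply order_iso_is_glb; auto.
  - intros S j _. apply order_iso_is_lub; auto.
Qed.

Lemma order_iso_psiop_hom (D : Doctrine) {X Y} (leX : rel X) (leY : rel Y) (f : X -> Y) :
  (forall y, exists x, f x = y) -> (forall x x', leX x x' <-> leY (f x) (f x')) ->
  psiop_hom D leX leY f.
Proof. intros Hsurj Hemb S m _. apply order_iso_is_glb; auto. Qed.

Lemma is_iso_of_order_iso (H : forall X Y : Type, rel X -> rel Y -> (X -> Y) -> Prop)
  {X Y} (leX : rel X) (leY : rel Y) (f : X -> Y) :
  (forall X Y (leX : rel X) (leY : rel Y) (f : X -> Y), (forall y, exists x, f x = y) ->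
     (forall x x', leX x x' <-> leY (f x) (f x')) -> H X Y leX leY f) ->
  is_poset leX -> (forall y, exists x, f x = y) ->
  (forall x x', leX x x' <-> leY (f x) (f x')) -> is_iso H leX leY f.
Proof.
  intros Hiso PX Hsurj Hemb.
  destruct (choice (fun y x => f x = y) Hsurj) as [g Hfg].
  assert (Hgf : forall x, g (f x) = x).
  { intros x. apply (po_antisym PX); apply Hemb; rewrite Hfg; apply Hemb, (po_refl PX). }
  split; [apply Hiso; auto |].
  exists g; split; [| split; auto]. apply Hiso.
  - intros x; exists (f x); auto.
  - intros y y'. rewrite Hemb, !Hfg. reflexivity.
Qed.

Section Duality.
Variables Phi Psi : Doctrine.
Hypothesis JP : join_doctrine Phi.
Hypothesis JQ : join_doctrine Psi.
Hypothesis SD : sound_dual Phi Psi.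

Lemma interchange {X Y} (leX : rel X) (leY : rel Y) (S : X -> Prop) (T : Y -> Prop)
  (F : X -> Y -> bool) :
  is_poset leX -> is_poset leY -> inD Psi leX S -> inD Phi leY T ->
  (forall x x' y y', leX x' x -> leY y y' -> le2 (F x y) (F x' y')) ->
  (forall x, S x -> exists y, T y /\ F x y = true) ->
  exists y, T y /\ forall x, S x -> F x y = true.
Proof.
  intros PX PY HS HT HF H.
  destruct (proj1 (proj1 SD _ (sub_le leX S) _ (sub_le leY T)
                     (sub_le_poset _ _ PX) (sub_le_poset _ _ PY) (fun _ => True) (fun _ => True)
                     (DX_full Phi JP _ _ PY HT) (DX_full Psi JQ _ _ PX HS)
                     (fun x y => F (proj1_sig x) (proj1_sig y))
                     (fun x x' y y' => HF _ _ _ _)))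
    as [[y Ty] [_ Hy]].
  - intros [x Sx] _. destruct (H x Sx) as [y [Ty Hy]]. exists (exist _ y Ty); auto.
  - exists y; split; auto. intros x Sx. exact (Hy (exist _ x Sx) I).
Qed.

Lemma pmeet_phi_hom {X} (leX : rel X) (S : Hom (phi_hom Phi leX le2) -> Prop) :
  is_poset leX -> inD Psi (opp (leHom (phi_hom Phi leX le2))) S ->
  phi_hom Phi leX le2 (pmeet S).
Proof.
  intros PX HS. split.
  - intros T m Hm. apply is_glb_le2_img. unfold pmeet. setoid_rewrite asboolE.
    split.
    + intros H x Tx h Sh. apply (phi_hom_2_meet Phi leX _ T m (proj2_sig h)); auto.
    + intros H h Sh. apply (phi_hom_2_meet Phi leX _ T m (proj2_sig h)); auto.
  - intros T j HT Hj. apply is_lub_le2_img. unfold pmeet. setoid_rewrite asboolE.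
    split.
    + intros H. apply (interchange (opp (leHom (phi_hom Phi leX le2))) leX S T
                         (fun h x => proj1_sig h x)); auto using opp_poset, leHom_poset.
      * intros h h' x x' Hh Hx Hhx. apply Hh.
        apply (phi_hom_monotone Phi leX le2 _ PX (proj2_sig h) x x'); auto.
      * intros h Sh. apply (phi_hom_2_join Phi leX _ T j (proj2_sig h)); auto.
    + intros [x [Tx Hx]] h Sh.
      apply (phi_hom_2_join Phi leX _ T j (proj2_sig h)); eauto.
Qed.

Lemma phi_dual_psiop_inf {X} (leX : rel X) :
  is_poset leX -> psiop_inf Psi (leHom (phi_hom Phi leX le2)).
Proof.
  intros PX. split; [apply leHom_poset |].
  intros S HS. eexists. apply (pmeet_is_glb _ S (pmeet_phi_hom leX S PX HS)).
Qed.

Lemma pmeet_psiop_hom {A} (leA : rel A) (S : Hom (psiop_hom Psi leA le2) -> Prop) :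
  psiop_hom Psi leA le2 (pmeet S).
Proof.
  intros T m HT Hm. apply is_glb_le2_img. unfold pmeet. setoid_rewrite asboolE.
  split.
  - intros H x Tx h Sh. apply (psiop_hom_2_meet Psi leA _ T m (proj2_sig h)); auto.
  - intros H h Sh. apply (psiop_hom_2_meet Psi leA _ T m (proj2_sig h)); auto.
Qed.

Lemma pjoin_psiop_hom {A} (leA : rel A) (S : Hom (psiop_hom Psi leA le2) -> Prop) :
  is_poset leA -> inD Phi (leHom (psiop_hom Psi leA le2)) S -> psiop_hom Psi leA le2 (pjoin S).
Proof.
  intros PA HS T m HT Hm. apply is_glb_le2_img. unfold pjoin. setoid_rewrite asboolE.
  split.
  - intros [h [Sh Hh]] x Tx. exists h; split; auto.
    apply (psiop_hom_2_meet Psi leA _ T m (proj2_sig h)); auto.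
  - intros H.
    destruct (interchange (opp leA) (leHom (psiop_hom Psi leA le2)) T S
                (fun x h => proj1_sig h x)) as [h [Sh Hh]]; auto using opp_poset, leHom_poset.
    + intros x x' h h' Hx Hh Hhx. apply Hh.
      apply (psiop_hom_monotone Psi JQ leA le2 _ PA (proj2_sig h) x x'); auto.
    + exists h; split; auto. apply (psiop_hom_2_meet Psi leA _ T m (proj2_sig h)); auto.
Qed.

Section PsiopDual.
Variables (A : Type) (leA : rel A).
Hypothesis HA : psiop_inf Psi leA.

Let PA : is_poset leA := proj1 HA.
Let HomA := Hom (psiop_hom Psi leA le2).
Let leHA := leHom (psiop_hom Psi leA le2).

Lemma psiop_hom_2_up (h : HomA) x y :
  leA x y -> proj1_sig h x = true -> proj1_sig h y = true.
Proof. apply (psiop_hom_monotone Psi JQ leA le2 _ PA (proj2_sig h)). Qed.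

Lemma psiop_dual_complete : complete_lattice leHA.
Proof.
  split; [apply leHom_poset |]. intros S.
  set (U := fun u => forall h, S h -> leHA h u).
  exists (exist _ (pmeet U) (pmeet_psiop_hom leA U)).
  unfold is_lub, leHA, leHom, le2, pmeet; simpl. split.
  - intros h Sh x Hx. apply asboolE. intros u Hu. exact (Hu h Sh x Hx).
  - intros u Hu x. rewrite asboolE. intros H. apply H; exact Hu.
Qed.

Lemma psiop_dual_is_glb S m :
  is_glb leHA S m -> forall x, proj1_sig m x = true <-> forall h, S h -> proj1_sig h x = true.
Proof. apply is_glb_pointwise, pmeet_psiop_hom. Qed.

Lemma psiop_dual_is_lub S j : inD Phi leHA S ->
  is_lub leHA S j -> forall x, proj1_sig j x = true <-> exists h, S h /\ proj1_sig h x = true.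
Proof. intros HS. apply is_lub_pointwise, pjoin_psiop_hom; auto. Qed.

Definition chi_hom (a : A) : HomA :=
  exist _ (chi_up leA a) (chi_up_psiop_hom Psi leA a PA).

Lemma chi_hom_le a (h : HomA) : leHA (chi_hom a) h <-> proj1_sig h a = true.
Proof.
  unfold leHA, leHom, le2, chi_hom, chi_up; simpl. split.
  - intros H. apply H, asboolE, (po_refl PA).
  - intros Ha x. rewrite asboolE. intros Hax. apply (psiop_hom_2_up h a x); auto.
Qed.

Lemma chi_hom_compact a : compact Phi leHA (chi_hom a).
Proof.
  intros phi [Lphi Iphi] [j [Hj Hle]].
  apply chi_hom_le, (psiop_dual_is_lub phi j Iphi Hj) in Hle as [h [ph ha]].
  apply (Lphi _ h); auto. apply chi_hom_le; auto.
Qed.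

Definition hom_gen (L : A -> Prop) : HomA :=
  exist _ _ (pmeet_psiop_hom leA (fun h : HomA => forall a, L a -> proj1_sig h a = true)).

Lemma hom_genE L x : proj1_sig (hom_gen L) x = true <->
  forall h : HomA, (forall a, L a -> proj1_sig h a = true) -> proj1_sig h x = true.
Proof. apply asboolE. Qed.

Lemma hom_gen_self (h : HomA) : hom_gen (fun a => proj1_sig h a = true) = h.
Proof.
  apply Hom_ext; intros x. apply eq_true_iff_eq. rewrite hom_genE. split; auto.
Qed.

Lemma hom_gen_psi L : inD Psi (opp leA) L -> exists m, hom_gen L = chi_hom m.
Proof.
  intros HL. destruct (proj2 HA L HL) as [m Hm]. exists m.
  apply Hom_ext; intros x. apply eq_true_iff_eq. rewrite hom_genE. simpl. split.
  - intros H. apply (H (chi_hom m)). intros a La. apply asboolE, Hm; auto.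
  - intros Hmx h Hh. apply (psiop_hom_2_up h m x); [exact (proj1 (asboolE _) Hmx) |].
    apply (psiop_hom_2_meet Psi leA _ L m (proj2_sig h)); auto.
Qed.

Lemma hom_gen_mono L L' : incl L L' -> leHA (hom_gen L) (hom_gen L').
Proof.
  intros H x. unfold le2. rewrite !hom_genE. intros G h Hh. apply G. intros a La; auto.
Qed.

Lemma hom_gen_union (AA : (A -> Prop) -> Prop) :
  is_lub leHA (img hom_gen AA) (hom_gen (fun x => exists L, AA L /\ L x)).
Proof.
  split.
  - intros c [L [AL <-]]. apply hom_gen_mono. intros x Lx; eauto.
  - intros u Hu x. unfold le2. rewrite hom_genE. intros H. apply H.
    intros a [L [AL La]]. apply (Hu (hom_gen L)); [exists L; auto |].
    apply hom_genE. auto.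
Qed.

Lemma hom_gen_inD (AA : (A -> Prop) -> Prop) :
  inD Phi (@incl A) AA -> inD Phi leHA (img hom_gen AA).
Proof.
  apply inD_image; auto using incl_poset.
  - apply leHom_poset.
  - intros L L' _ _; apply hom_gen_mono.
Qed.

Lemma hom_true_lower (h : HomA) : lower (opp leA) (fun a => proj1_sig h a = true).
Proof. intros x y Hxy Hy. apply (psiop_hom_2_up h y x); auto. Qed.

(* The second half of soundness, applied to [A^op], generates every [h] from principal ones. *)
Lemma psiop_dual_generated (C : HomA -> Prop) :
  (forall a, C (chi_hom a)) -> D_join_closed Phi leHA C -> forall h, C h.
Proof.
  intros Hchi HC h. rewrite <- hom_gen_self.
  apply (proj2 SD A (opp leA) (opp_poset _ PA) (fun L => C (hom_gen L)));
    [| | apply hom_true_lower].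
  - intros L [_ HL]. destruct (hom_gen_psi L HL) as [m ->]. apply Hchi.
  - intros AA HAA HI. apply (HC (img hom_gen AA)).
    + apply hom_gen_inD; auto.
    + intros c [L [AL <-]]. apply HAA; auto.
    + apply hom_gen_union.
Qed.

Lemma psiop_dual_algebraic : phi_algebraic Phi leHA.
Proof.
  split; [apply psiop_dual_complete |].
  intros C HK HC. apply psiop_dual_generated; auto.
  intros a; apply HK, chi_hom_compact.
Qed.

Lemma psiop_dual_compact c : compact Phi leHA c -> exists a, c = chi_hom a.
Proof.
  apply (compact_generator Phi JP leHA (fun c => exists a, c = chi_hom a)).
  - apply leHom_poset.
  - intros C HB HC. apply psiop_dual_generated; auto. intros a; apply HB; eauto.
Qed.

Lemma eval_phi_hom a : phi_hom Phi leHA le2 (fun h : HomA => proj1_sig h a).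
Proof.
  split.
  - intros S m Hm. apply is_glb_le2_img, psiop_dual_is_glb; auto.
  - intros S j HS Hj. apply is_lub_le2_img, psiop_dual_is_lub; auto.
Qed.

Lemma le_iff_psiop_homs a b :
  leA a b <-> forall h : HomA, proj1_sig h a = true -> proj1_sig h b = true.
Proof.
  split.
  - intros Hab h. apply (psiop_hom_2_up h a b Hab).
  - intros H. apply asboolE, (H (chi_hom a)), asboolE, (po_refl PA).
Qed.

End PsiopDual.

Section AlgebraicDual.
Variables (X : Type) (leX : rel X).
Hypothesis HX : phi_algebraic Phi leX.

Let CX : complete_lattice leX := proj1 HX.
Let PX : is_poset leX := proj1 CX.
Let HomX := Hom (phi_hom Phi leX le2).
Let leH := leHom (phi_hom Phi leX le2).

Lemma chi_up_phi_hom k : compact Phi leX k -> phi_hom Phi leX le2 (chi_up leX k).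
Proof.
  intros Hk. split.
  - intros S m Hm. apply chi_up_is_glb; auto.
  - intros S j HS Hj. apply is_lub_le2_img. unfold chi_up. setoid_rewrite asboolE. split.
    + apply (compact_below_member Phi JP leX k S j PX Hk HS Hj).
    + intros [s [Ss Hs]]. apply (po_trans PX _ s); auto. apply Hj; auto.
Qed.

Definition compacts := {k : X | compact Phi leX k}.
Let leK := sub_le leX (compact Phi leX).
Let PK : is_poset leK := sub_le_poset _ _ PX.

Definition chi_phi (k : compacts) : HomX :=
  exist _ (chi_up leX (proj1_sig k)) (chi_up_phi_hom (proj1_sig k) (proj2_sig k)).

Lemma chi_phi_le k k' : leH (chi_phi k) (chi_phi k') <-> leK k' k.
Proof.
  unfold leH, leHom, le2, leK, sub_le, chi_up; simpl. setoid_rewrite asboolE. split.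
  - intros H. apply H, (po_refl PX).
  - intros H x Hx. apply (po_trans PX _ (proj1_sig k)); auto.
Qed.

(* A map to [2] preserving all meets is the indicator of [x >= k] for [k] the meet of its
   support; preserving Phi-joins makes [k] compact. *)
Lemma phi_hom_2_principal (h : HomX) : exists k, h = chi_phi k.
Proof.
  destruct (complete_lattice_glb leX CX (fun x => proj1_sig h x = true)) as [m Hm].
  assert (hm : proj1_sig h m = true)
    by (apply (phi_hom_2_meet Phi leX _ (fun x => proj1_sig h x = true) m (proj2_sig h)); auto).
  assert (Hhm : forall x, proj1_sig h x = true <-> leX m x).
  { intros x; split; [apply Hm |].
    intros Hmx. apply (phi_hom_monotone Phi leX le2 _ PX (proj2_sig h) m x); auto. }
  assert (Hc : compact Phi leX m).
  { intros phi [Lphi Iphi] [j [Hj Hmj]].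
    apply Hhm, (phi_hom_2_join Phi leX _ phi j (proj2_sig h) Iphi Hj) in Hmj as [y [py hy]].
    apply (Lphi m y); auto. apply Hhm; auto. }
  exists (exist _ m Hc). apply Hom_ext; intros x. apply eq_true_iff_eq.
  simpl; unfold chi_up. rewrite asboolE. apply Hhm.
Qed.

Lemma algebraic_join_compacts x : is_lub leX (fun k => compact Phi leX k /\ leX k x) x.
Proof.
  apply (proj2 HX (fun x => is_lub leX (fun k => compact Phi leX k /\ leX k x) x)).
  - intros k Hk. split.
    + intros y [_ H]; auto.
    + intros u Hu. apply Hu. split; auto. apply (po_refl PX).
  - intros S j HS HC Hj. split.
    + intros y [_ H]; auto.
    + intros u Hu. apply Hj. intros s Ss. apply (HC s Ss). intros k [Hk Hks]. apply Hu.
      split; auto. apply (po_trans PX _ s); auto. apply Hj; auto.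
Qed.

Lemma le_iff_phi_homs x y :
  leX x y <-> forall h : HomX, proj1_sig h x = true -> proj1_sig h y = true.
Proof.
  split.
  - intros Hxy h. apply (phi_hom_monotone Phi leX le2 _ PX (proj2_sig h) x y Hxy).
  - intros H. apply (algebraic_join_compacts x). intros k [Hk Hkx].
    specialize (H (chi_phi (exist _ k Hk))). simpl in H; unfold chi_up in H.
    rewrite !asboolE in H. auto.
Qed.

Lemma eval_psiop_hom x : psiop_hom Psi leH le2 (fun h : HomX => proj1_sig h x).
Proof.
  intros S m HS Hm. apply is_glb_le2_img.
  apply (is_glb_pointwise _ S m (pmeet_phi_hom leX S PX HS) Hm).
Qed.

Let HomH := Hom (psiop_hom Psi leH le2).
Let leHH := leHom (psiop_hom Psi leH le2).

Definition eval (x : X) : HomH := exist _ (fun h : HomX => proj1_sig h x) (eval_psiop_hom x).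

Lemma eval_le x y : leX x y <-> leHH (eval x) (eval y).
Proof. rewrite le_iff_phi_homs. reflexivity. Qed.

(* Each compact [l <= j] lies in [phi], and interchange yields one [y] in [phi] above all of
   [L], hence above [j]. *)
Lemma compact_join_psi (L : compacts -> Prop) j :
  inD Psi leK L -> is_lub leX (img (@proj1_sig _ _) L) j -> compact Phi leX j.
Proof.
  intros HL Hj phi Hphi [j2 [Hj2 Hjj2]].
  destruct (interchange leK leX L phi (fun l y => chi_up leX (proj1_sig l) y))
    as [y [py Hy]]; auto.
  - exact (proj2 Hphi).
  - intros l l' y y' Hl Hy. unfold le2, chi_up. rewrite !asboolE. intros Hly.
    apply (po_trans PX _ (proj1_sig l)); auto. apply (po_trans PX _ y); auto.
  - intros l Ll. exists (proj1_sig l). split.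
    + apply (proj2_sig l); auto. exists j2; split; auto.
      apply (po_trans PX _ j); auto. apply Hj. exists l; auto.
    + apply asboolE, (po_refl PX).
  - apply (proj1 Hphi j y); auto. apply Hj. intros c [l [Ll <-]]. apply asboolE, (Hy l Ll).
Qed.

Lemma chi_phi_is_glb (L : compacts -> Prop) (j : compacts) :
  is_lub leX (img (@proj1_sig _ _) L) (proj1_sig j) -> is_glb leH (img chi_phi L) (chi_phi j).
Proof.
  intros Hj. split.
  - intros c [l [Ll <-]]. apply chi_phi_le, Hj. exists l; auto.
  - intros g Hg. destruct (phi_hom_2_principal g) as [b ->]. apply chi_phi_le, Hj.
    intros c [l [Ll <-]]. apply chi_phi_le, Hg. exists l; auto.
Qed.

Let joinK (L : compacts -> Prop) : X := sup leX CX (img (@proj1_sig _ _) L).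

Lemma joinK_union (AA : (compacts -> Prop) -> Prop) :
  is_lub leX (img joinK AA) (joinK (fun k => exists L, AA L /\ L k)).
Proof.
  split.
  - intros c [L [AL <-]]. apply is_lub_sup. intros c [l [Ll <-]]. apply is_lub_sup.
    exists l; split; auto. exists L; auto.
  - intros u Hu. apply is_lub_sup. intros c [l [[L [AL Ll]] <-]].
    apply (po_trans PX _ (joinK L)); [| apply Hu; exists L; auto].
    apply is_lub_sup. exists l; auto.
Qed.

Lemma joinK_inD (AA : (compacts -> Prop) -> Prop) :
  inD Phi (@incl compacts) AA -> inD Phi leX (img joinK AA).
Proof.
  apply inD_image; auto using incl_poset.
  intros L L' _ _ HLL'. apply is_lub_sup. intros c [l [Ll <-]].
  apply is_lub_sup. exists l; auto.
Qed.

Section EvalSurjective.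
Variable H : HomH.

Let support (k : compacts) : Prop := proj1_sig H (chi_phi k) = true.

Lemma support_lower : lower leK support.
Proof.
  intros k k' Hk Hk'.
  apply (psiop_hom_monotone Psi JQ leH le2 _ (leHom_poset _) (proj2_sig H) (chi_phi k')); auto.
  apply chi_phi_le; auto.
Qed.

Lemma support_psi_join (L : compacts -> Prop) :
  inD Psi leK L -> incl L support -> forall k, leX (proj1_sig k) (joinK L) -> support k.
Proof.
  intros HL Sub k Hk.
  pose (j := exist _ (joinK L) (compact_join_psi L _ HL (is_lub_sup _ _ _)) : compacts).
  apply (support_lower k j); auto.
  apply (psiop_hom_2_meet Psi leH _ (img chi_phi L) (chi_phi j) (proj2_sig H)).
  - apply (inD_image Psi JQ leK (opp leH)); auto.
    + apply opp_poset, leHom_poset.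
    + intros a b _ _ Hab. apply chi_phi_le; auto.
  - apply chi_phi_is_glb, is_lub_sup.
  - intros c [l [Ll <-]]. apply Sub; auto.
Qed.

Lemma support_below_join : forall L : compacts -> Prop, lower leK L -> incl L support ->
  forall k, leX (proj1_sig k) (joinK L) -> support k.
Proof.
  apply (proj2 SD compacts leK PK
           (fun L => incl L support -> forall k, leX (proj1_sig k) (joinK L) -> support k));
    auto.
  - intros L1 [_ HL1]. apply support_psi_join; auto.
  - intros AA HAA HI Sub k Hk.
    destruct (compact_below_member Phi JP leX (proj1_sig k) _ _ PX (proj2_sig k)
                (joinK_inD AA HI) (joinK_union AA) Hk) as [s [[L [AL <-]] Hs]].
    apply (proj2 (HAA L AL)); auto.
    intros l Ll. apply Sub. exists L; auto.
Qed.

Lemma eval_surjective : exists x, eval x = H.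
Proof.
  exists (joinK support). apply Hom_ext; intros h. simpl.
  destruct (phi_hom_2_principal h) as [k ->]. apply eq_true_iff_eq.
  unfold chi_phi, chi_up; simpl. rewrite asboolE. split.
  - apply (support_below_join support support_lower (fun k Hk => Hk)).
  - intros Hk. apply is_lub_sup. exists k; auto.
Qed.

End EvalSurjective.
End AlgebraicDual.

Lemma unit_is_iso (X : Type) (leX : rel X) : phi_algebraic Phi leX ->
  exists Hev : (forall x : X,
                  psiop_hom Psi (leHom (phi_hom Phi leX le2)) le2 (fun h => proj1_sig h x)),
    is_iso (@phi_hom Phi) leX (leHom (psiop_hom Psi (leHom (phi_hom Phi leX le2)) le2))
      (fun x => exist _ (fun h => proj1_sig h x) (Hev x)).
Proof.
  intros HX. exists (eval_psiop_hom X leX HX).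
  apply is_iso_of_order_iso; [apply order_iso_phi_hom | exact (proj1 (proj1 HX)) | |].
  - apply eval_surjective.
  - apply eval_le.
Qed.

Lemma counit_is_iso (A : Type) (leA : rel A) : psiop_inf Psi leA ->
  exists Hev : (forall a : A,
                  phi_hom Phi (leHom (psiop_hom Psi leA le2)) le2 (fun h => proj1_sig h a)),
    is_iso (@psiop_hom Psi) leA (leHom (phi_hom Phi (leHom (psiop_hom Psi leA le2)) le2))
      (fun a => exist _ (fun h => proj1_sig h a) (Hev a)).
Proof.
  intros HA. exists (eval_phi_hom A leA HA).
  apply is_iso_of_order_iso; [apply order_iso_psiop_hom | exact (proj1 HA) | |].
  - intros G.
    destruct (phi_hom_2_principal _ _ (psiop_dual_algebraic A leA HA) G) as [[c Hc] ->].
    destruct (psiop_dual_compact A leA HA c Hc) as [a ->].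
    exists a. apply Hom_ext; intros h. apply eq_true_iff_eq.
    unfold chi_phi, chi_up; simpl. rewrite asboolE. symmetry. apply chi_hom_le.
  - intros a b. rewrite (le_iff_psiop_homs A leA HA). reflexivity.
Qed.

Lemma precomp_phi_dual (X : Type) (leX : rel X) (Y : Type) (leY : rel Y) (f : X -> Y) :
  phi_algebraic Phi leX -> phi_algebraic Phi leY -> phi_hom Phi leX leY f ->
  exists Hc : (forall h : Hom (phi_hom Phi leY le2),
                 phi_hom Phi leX le2 (fun x => proj1_sig h (f x))),
    psiop_hom Psi (leHom (phi_hom Phi leY le2)) (leHom (phi_hom Phi leX le2))
      (fun h => exist _ (fun x => proj1_sig h (f x)) (Hc h)).
Proof.
  intros HX HY Hf. set (PX := proj1 (proj1 HX)). set (PY := proj1 (proj1 HY)).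
  pose (Hc h := phi_hom_comp Phi JP leX leY le2 f _ PX PY Hf (proj2_sig h)).
  exists Hc.
  intros S m HS Hm. apply precomp_is_glb.
  apply (is_glb_pointwise _ S m (pmeet_phi_hom leY S PY HS) Hm).
Qed.

Lemma precomp_psiop_dual (A : Type) (leA : rel A) (B : Type) (leB : rel B) (g : A -> B) :
  psiop_inf Psi leA -> psiop_inf Psi leB -> psiop_hom Psi leA leB g ->
  exists Hc : (forall h : Hom (psiop_hom Psi leB le2),
                 psiop_hom Psi leA le2 (fun a => proj1_sig h (g a))),
    phi_hom Phi (leHom (psiop_hom Psi leB le2)) (leHom (psiop_hom Psi leA le2))
      (fun h => exist _ (fun a => proj1_sig h (g a)) (Hc h)).
Proof.
  intros HA HB Hg.
  pose (Hc h := psiop_hom_comp Psi JQ leA leB le2 g _ (proj1 HA) (proj1 HB) Hg (proj2_sig h)).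
  exists Hc.
  split.
  - intros S m Hm. apply precomp_is_glb, (psiop_dual_is_glb B leB S m Hm).
  - intros S j HS Hj. apply precomp_is_lub, (psiop_dual_is_lub B leB HB S j HS Hj).
Qed.

Lemma omega_not_in_both : Psi nat Peano.le -> Phi nat Peano.le -> False.
Proof.
  intros HQ HP.
  destruct (interchange Peano.le Peano.le (fun _ => True) (fun _ => True) Nat.leb)
    as [y [_ Hy]]; auto using nat_le_poset, inD_full.
  - intros x x' y y' Hx Hy. unfold le2. rewrite !Nat.leb_le. lia.
  - intros x _. exists x; split; auto. apply Nat.leb_le; auto.
  - specialize (Hy (S y) I). apply Nat.leb_le in Hy. lia.
Qed.

Lemma omega_in_psi : ~ Phi nat Peano.le -> Psi nat Peano.le.
Proof.
  intros Hn.
  enough (H : (forall n : nat, True) -> Psi nat Peano.le) by (apply H; auto).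
  apply (proj2 SD nat Peano.le nat_le_poset (fun L => (forall n, L n) -> Psi nat Peano.le));
    [| | intros x y _ _; auto].
  - intros L [_ HL] Hfull. apply (D_of_inD_full Psi JQ _ nat_le_poset).
    apply (inD_ext Psi JQ _ L); auto using nat_le_poset. firstorder.
  - intros AA HAA HI Hfull.
    destruct (classic (exists A, AA A /\ forall n, A n)) as [[A [AA0 HA0]] | Hproper].
    + apply (proj2 (HAA A AA0)); auto.
    + exfalso. apply Hn, (nat_of_proper_lower_cover Phi JP AA); auto.
      intros A AA0. split; [apply (HAA A AA0) |].
      apply NNPP; intros Hall. apply Hproper. exists A; split; auto.
      intros n. apply NNPP; eauto.
Qed.

Definition compact_ideal {T} (le : rel T) (x y : T) : Prop :=
  exists k, compact Phi le k /\ le k x /\ le y k.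

Section AlgebraicContinuous.
Variables (X : Type) (leX : rel X).
Hypothesis HX : phi_algebraic Phi leX.
Let PX : is_poset leX := proj1 (proj1 HX).

Lemma compact_ideal_mono x x' : leX x x' -> incl (compact_ideal leX x) (compact_ideal leX x').
Proof.
  intros Hx y [k [Hk [Hkx Hyk]]]. exists k; repeat split; auto. apply (po_trans PX _ x); auto.
Qed.

Lemma compact_ideal_inD x : inD Phi leX (compact_ideal leX x).
Proof.
  apply (proj2 HX (fun x => inD Phi leX (compact_ideal leX x))).
  - intros k Hk. apply (inD_with_max Phi JP _ _ k PX).
    + exists k; repeat split; auto; apply (po_refl PX).
    + intros y [k' [_ [Hk'k Hyk']]]. apply (po_trans PX _ k'); auto.
  - intros S j HS HC Hj.
    apply (inD_ext Phi JP _ (fun y => exists I, img (compact_ideal leX) S I /\ I y)); auto.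
    + apply inD_union; auto.
      * intros I [s [Ss <-]]; auto.
      * apply (inD_image Phi JP leX incl); auto using incl_poset.
        intros a b _ _; apply compact_ideal_mono.
    + intros y; split.
      * intros [I [[s [Ss <-]] Hy]]. apply (compact_ideal_mono s j); auto. apply Hj; auto.
      * intros [k [Hk [Hkj Hyk]]].
        destruct (compact_below_member Phi JP leX k S j PX Hk HS Hj Hkj) as [s [Ss Hks]].
        exists (compact_ideal leX s); split; [exists s; auto |]. exists k; auto.
Qed.

Lemma algebraic_continuous : phi_continuous Phi leX.
Proof.
  split; [exact (proj1 HX) |]. intros x.
  exists (compact_ideal leX x). split; [split | split].
  - intros y y' Hy [k [Hk [Hkx Hy'k]]]. exists k; repeat split; auto.
    apply (po_trans PX _ y'); auto.
  - apply compact_ideal_inD.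
  - intros y [k [Hk [Hkx Hyk]]]. apply (dwa_lower Phi leX x y k Hyk).
    apply (dwa_mono Phi leX k x k PX Hkx Hk).
  - destruct (proj2 (proj1 HX) (compact_ideal leX x)) as [j Hj]. exists j; split; auto.
    apply (algebraic_join_compacts X leX HX x). intros k [Hk Hkx]. apply Hj.
    exists k; repeat split; auto. apply (po_refl PX).
Qed.

End AlgebraicContinuous.

Section ContinuousAlgebraic.
Variables (X : Type) (leX : rel X).
Hypothesis HC : phi_continuous Phi leX.
Let CX : complete_lattice leX := proj1 HC.
Let PX : is_poset leX := proj1 CX.

Lemma dwa_continuity_witness z :
  DX Phi leX (dwa Phi leX z) /\ below_join leX (dwa Phi leX z) z.
Proof.
  destruct (proj2 HC z) as [phi [Hphi [Hsub Hb]]].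
  replace phi with (dwa Phi leX z) in *; auto.
  apply functional_extensionality; intros y; apply propositional_extensionality; split; auto.
  intros H. apply H; auto.
Qed.

Lemma dwa_interpolate x y : dwa Phi leX x y -> exists z, dwa Phi leX z y /\ dwa Phi leX x z.
Proof.
  intros Hy.
  set (W := fun w => exists I, img (dwa Phi leX) (dwa Phi leX x) I /\ I w).
  assert (HW : DX Phi leX W).
  { split.
    - intros a b Hab [I [[z [Hz <-]] Hb]]. exists (dwa Phi leX z); split; [exists z; auto |].
      apply (dwa_lower Phi leX z a b); auto.
    - apply inD_union; auto.
      + intros I [z [_ <-]]. apply (proj2 (proj1 (dwa_continuity_witness z))).
      + apply (inD_image Phi JP leX incl); auto using incl_poset.
        * intros a b _ _ Hab w. apply (dwa_mono Phi leX a b w PX Hab).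
        * apply (proj2 (proj1 (dwa_continuity_witness x))). }
  assert (HbW : below_join leX W x).
  { destruct (proj2 CX W) as [j Hj]. exists j; split; auto.
    destruct (proj2 (dwa_continuity_witness x)) as [jx [Hjx Hxjx]].
    apply (po_trans PX _ jx); auto. apply Hjx. intros z Hz.
    destruct (proj2 (dwa_continuity_witness z)) as [jz [Hjz Hzjz]].
    apply (po_trans PX _ jz); auto. apply Hjz. intros w Hw. apply Hj.
    exists (dwa Phi leX z); split; auto. exists z; auto. }
  destruct (Hy W HW HbW) as [I [[z [Hz <-]] Hyz]]. exists z; auto.
Qed.

Lemma dwa_chain x y : dwa Phi leX x y ->
  exists a : nat -> X, a 0 = y /\ forall n, dwa Phi leX (a (S n)) (a n) /\ dwa Phi leX x (a n).
Proof.
  intros Hy. set (P := {z | dwa Phi leX x z}).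
  assert (Hstep : forall p : P, exists q : P, dwa Phi leX (proj1_sig q) (proj1_sig p)).
  { intros [z Hz]. destruct (dwa_interpolate x z Hz) as [z' [Hz' Hxz']].
    exists (exist _ z' Hxz'); auto. }
  destruct (choice _ Hstep) as [step Hstep'].
  exists (fun n => proj1_sig (Nat.iter n step (exist _ y Hy : P))). split; auto.
  intros n. split; [apply Hstep' | apply proj2_sig].
Qed.

(* The interchange law over [omega] places a single element of [phi] above the whole chain. *)
Lemma dwa_chain_sup_compact (a : nat -> X) k : Psi nat Peano.le ->
  (forall n, dwa Phi leX (a (S n)) (a n)) -> is_lub leX (fun z => exists n, a n = z) k ->
  compact Phi leX k.
Proof.
  intros HPsi Ha Hk phi Hphi [j [Hj Hkj]].
  assert (Hmono : forall n m, n <= m -> leX (a n) (a m)).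
  { induction 1; [apply (po_refl PX) |].
    apply (po_trans PX _ (a m)); auto. apply (dwa_le Phi JP leX); auto. }
  destruct (interchange Peano.le leX (fun _ => True) phi (fun n w => chi_up leX (a n) w))
    as [w [pw Hw]]; auto using nat_le_poset, inD_full.
  - exact (proj2 Hphi).
  - intros n n' w w' Hn Hw. unfold le2, chi_up. rewrite !asboolE. intros Hnw.
    apply (po_trans PX _ (a n)); auto. apply (po_trans PX _ w); auto.
  - intros n _. exists (a n); split; [| apply asboolE, (po_refl PX)].
    apply (Ha n); auto. exists j; split; auto.
    apply (po_trans PX _ k); auto. apply Hk. eauto.
  - apply (proj1 Hphi k w); auto. apply Hk. intros z [n <-]. apply asboolE, (Hw n I).
Qed.

Lemma dwa_compact_between x y : Psi nat Peano.le -> dwa Phi leX x y ->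
  exists k, compact Phi leX k /\ leX y k /\ leX k x.
Proof.
  intros HPsi Hy. destruct (dwa_chain x y Hy) as [a [Ha0 Ha]].
  destruct (proj2 CX (fun z => exists n, a n = z)) as [k Hk].
  exists k; split; [| split].
  - apply (dwa_chain_sup_compact a k HPsi); auto. intros n; exact (proj1 (Ha n)).
  - rewrite <- Ha0. apply Hk. exists 0; auto.
  - apply Hk. intros z [n <-]. apply (dwa_le Phi JP leX); auto. exact (proj2 (Ha n)).
Qed.

Lemma continuous_algebraic : Psi nat Peano.le -> phi_algebraic Phi leX.
Proof.
  intros HPsi. split; auto. intros C HK HCl x.
  destruct (proj2 (dwa_continuity_witness x)) as [jx [Hjx Hxjx]].
  apply (HCl (fun k => compact Phi leX k /\ leX k x)).
  - apply (inD_cofinal_subset Phi JP _ _ (dwa Phi leX x) PX).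
    + apply (proj2 (proj1 (dwa_continuity_witness x))).
    + intros k [Hk Hkx]. apply (dwa_mono Phi leX k x k PX Hkx Hk).
    + intros y Hy. destruct (dwa_compact_between x y HPsi Hy) as [k [Hk [Hyk Hkx]]].
      exists k; auto.
  - intros k [Hk _]; auto.
  - split; [intros k [_ Hkx]; auto |].
    intros u Hu. apply (po_trans PX _ jx); auto. apply Hjx. intros y Hy.
    destruct (dwa_compact_between x y HPsi Hy) as [k [Hk [Hyk Hkx]]].
    apply (po_trans PX _ k); auto.
Qed.

End ContinuousAlgebraic.

End Duality.

Section UnitInterval.
Open Scope R_scope.

Lemma inv_INR_succ_pos n : 0 < / INR (S n).
Proof. rewrite S_INR. apply RinvN_pos. Qed.

Lemma inv_INR_succ_le1 n : / INR (S n) <= 1.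
Proof.
  rewrite <- Rinv_1. apply Rinv_le_contravar; [lra |].
  rewrite S_INR. pose proof (pos_INR n). lra.
Qed.

Lemma inv_INR_succ_antitone n m : (n <= m)%nat -> / INR (S m) <= / INR (S n).
Proof. intros H. apply Rinv_le_contravar; [apply lt_0_INR; lia | apply le_INR; lia]. Qed.

Lemma inv_INR_succ_small eps : 0 < eps -> exists N, / INR (S N) < eps.
Proof.
  intros Heps. destruct (archimed_cor1 eps Heps) as [N [HN HN0]]. exists N.
  apply (Rle_lt_trans _ (/ INR N)); auto.
  apply Rinv_le_contravar; [apply lt_0_INR; lia | apply le_INR; lia].
Qed.

Definition unit_interval := {r : R | 0 <= r <= 1}.
Definition leI : rel unit_interval := fun a b => proj1_sig a <= proj1_sig b.
Local Notation v := (@proj1_sig R (fun r => 0 <= r <= 1)).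

Lemma v_range (a : unit_interval) : 0 <= v a <= 1.
Proof. exact (proj2_sig a). Qed.

Lemma leI_poset : is_poset leI.
Proof.
  unfold leI; split; [intros; lra | intros; lra |].
  intros [x px] [y py]; simpl; intros H1 H2.
  assert (x = y) as <- by lra. f_equal; apply proof_irrelevance.
Qed.

Definition I0 : unit_interval := exist _ 0 (conj (Rle_refl 0) Rle_0_1).
Definition I1 : unit_interval := exist _ 1 (conj Rle_0_1 (Rle_refl 1)).

Lemma leI_complete : complete_lattice leI.
Proof.
  split; [exact leI_poset |]. intros S.
  destruct (classic (exists p, S p)) as [[p Sp] | Hempty].
  - set (E := fun r => exists q, S q /\ v q = r).
    destruct (completeness E) as [m [Hm1 Hm2]].
    + exists 1. intros r [q [_ <-]]. apply v_range.
    + exists (v p), p; auto.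
    + assert (Hm : 0 <= m <= 1).
      { split.
        - apply (Rle_trans _ (v p)); [apply v_range | apply Hm1; exists p; auto].
        - apply Hm2. intros r [q [_ <-]]. apply v_range. }
      exists (exist _ m Hm). unfold leI; split; simpl.
      * intros q Sq. apply Hm1. exists q; auto.
      * intros u Hu. apply Hm2. intros r [q [Sq <-]]. apply Hu; auto.
  - exists I0. unfold leI; split; simpl.
    + intros q Sq. exfalso; eauto.
    + intros u _. apply v_range.
Qed.

Lemma below_is_lub x : 0 < v x -> is_lub leI (fun w => v w < v x) x.
Proof.
  intros Hx. unfold leI; split.
  - intros w Hw. lra.
  - intros u Hu. apply Rnot_lt_le. intros Hux.
    assert (Hmid : 0 <= (v u + v x) / 2 <= 1) by (pose proof (v_range u); pose proof (v_range x); lra).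
    specialize (Hu (exist _ _ Hmid)). simpl in Hu.
    assert ((v u + v x) / 2 <= v u) by (apply Hu; lra). lra.
Qed.

Variable Phi : Doctrine.
Hypothesis JP : join_doctrine Phi.
Hypothesis HN : Phi nat Peano.le.

Lemma lt_dwa x y : v y < v x -> dwa Phi leI x y.
Proof.
  intros Hyx psi [Lpsi _] [j [Hj Hxj]]. apply NNPP; intros Hy.
  assert (Hbound : forall w, psi w -> v w < v y).
  { intros w pw. apply Rnot_le_lt. intros Hyw. apply Hy, (Lpsi y w); auto. }
  assert (leI j y) by (apply Hj; intros w pw; unfold leI; specialize (Hbound w pw); lra).
  unfold leI in *. lra.
Qed.

(* The sequence [x (1 - 1/(n+1))] is a cofinal image of [omega]. *)
Lemma below_DX x : 0 < v x -> DX Phi leI (fun w => v w < v x).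
Proof.
  intros Hx. split; [intros a b Hab Hb; unfold leI in Hab; lra |].
  assert (Happrox : forall n : nat, 0 <= v x * (1 - / INR (S n)) <= 1).
  { intros n. pose proof (inv_INR_succ_pos n). pose proof (inv_INR_succ_le1 n).
    pose proof (v_range x). split; nra. }
  apply (inD_cofinal_image Phi JP Peano.le leI (fun n => exist _ _ (Happrox n)));
    auto using nat_le_poset, leI_poset.
  - intros n m Hnm. unfold leI; cbn [proj1_sig].
    pose proof (inv_INR_succ_antitone n m Hnm). nra.
  - intros n; cbn [proj1_sig]. pose proof (inv_INR_succ_pos n). nra.
  - intros w Hw.
    destruct (inv_INR_succ_small ((v x - v w) / v x)) as [N HN'].
    { apply Rdiv_lt_0_compat; lra. }
    exists N. unfold leI; cbn [proj1_sig].
    apply (Rmult_lt_compat_r (v x)) in HN'; auto.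
    unfold Rdiv in HN'. rewrite Rmult_assoc, Rinv_l in HN'; lra.
Qed.

Lemma leI_continuous : phi_continuous Phi leI.
Proof.
  split; [exact leI_complete |]. intros x.
  destruct (Rlt_or_le 0 (v x)) as [Hx | Hx].
  - exists (fun w => v w < v x). split; [apply below_DX; auto | split].
    + intros y Hy. apply lt_dwa; auto.
    + exists x; split; [apply below_is_lub; auto | apply (po_refl leI_poset)].
  - apply (least_continuity_witness Phi JP leI x leI_poset).
    intros y. unfold leI. pose proof (v_range y). lra.
Qed.

Lemma leI_not_algebraic : ~ phi_algebraic Phi leI.
Proof.
  intros Halg.
  assert (H1 : v I1 = 0); [| simpl in H1; lra].
  apply (proj2 Halg (fun w => v w = 0)).
  - intros k Hk. apply NNPP; intros Hk0.
    assert (Hpos : 0 < v k) by (pose proof (v_range k); lra).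
    assert (v k < v k); [| lra].
    apply (Hk (fun w => v w < v k)); [apply below_DX; auto |].
    exists k; split; [apply below_is_lub; auto | apply (po_refl leI_poset)].
  - intros S j _ HC Hj.
    assert (leI j I0) by (apply Hj; intros s Ss; unfold leI; simpl; rewrite HC; auto; lra).
    unfold leI in *; simpl in *. pose proof (v_range j). lra.
Qed.

End UnitInterval.

Theorem corollary3p7 (Phi Psi : Doctrine) :
  join_doctrine Phi -> join_doctrine Psi -> sound_dual Phi Psi ->
  (* The functor X |-> Phi AlgLat(X,2): on objects *)
  (forall (X : Type) (leX : rel X), phi_algebraic Phi leX ->
     psiop_inf Psi (leHom (phi_hom Phi leX le2))) /\
  (* ... and on morphisms, by precomposition *)
  (forall (X : Type) (leX : rel X) (Y : Type) (leY : rel Y) (f : X -> Y),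
     phi_algebraic Phi leX -> phi_algebraic Phi leY -> phi_hom Phi leX leY f ->
     exists Hc : (forall h : Hom (phi_hom Phi leY le2),
                    phi_hom Phi leX le2 (fun x => proj1_sig h (f x))),
       psiop_hom Psi (leHom (phi_hom Phi leY le2)) (leHom (phi_hom Phi leX le2))
         (fun h => exist _ (fun x => proj1_sig h (f x)) (Hc h))) /\
  (* The functor A |-> Psi^op Inf(A,2): on objects *)
  (forall (A : Type) (leA : rel A), psiop_inf Psi leA ->
     phi_algebraic Phi (leHom (psiop_hom Psi leA le2))) /\
  (* ... and on morphisms, by precomposition *)
  (forall (A : Type) (leA : rel A) (B : Type) (leB : rel B) (g : A -> B),
     psiop_inf Psi leA -> psiop_inf Psi leB -> psiop_hom Psi leA leB g ->
     exists Hc : (forall h : Hom (psiop_hom Psi leB le2),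
                    psiop_hom Psi leA le2 (fun a => proj1_sig h (g a))),
       phi_hom Phi (leHom (psiop_hom Psi leB le2)) (leHom (psiop_hom Psi leA le2))
         (fun h => exist _ (fun a => proj1_sig h (g a)) (Hc h))) /\
  (* unit: evaluation X -> Psi^op Inf(Phi AlgLat(X,2),2) is an isomorphism in Phi AlgLat *)
  (forall (X : Type) (leX : rel X), phi_algebraic Phi leX ->
     exists Hev : (forall x : X,
                     psiop_hom Psi (leHom (phi_hom Phi leX le2)) le2
                       (fun h => proj1_sig h x)),
       is_iso (@phi_hom Phi) leX
         (leHom (psiop_hom Psi (leHom (phi_hom Phi leX le2)) le2))
         (fun x => exist _ (fun h => proj1_sig h x) (Hev x))) /\
  (* counit: evaluation A -> Phi AlgLat(Psi^op Inf(A,2),2) is an isomorphism in Psi^op Inf *)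
  (forall (A : Type) (leA : rel A), psiop_inf Psi leA ->
     exists Hev : (forall a : A,
                     phi_hom Phi (leHom (psiop_hom Psi leA le2)) le2
                       (fun h => proj1_sig h a)),
       is_iso (@psiop_hom Psi) leA
         (leHom (phi_hom Phi (leHom (psiop_hom Psi leA le2)) le2))
         (fun a => exist _ (fun h => proj1_sig h a) (Hev a))) /\
  (* Phi AlgLat = Phi CtsLat iff omega notin Phi iff omega in Psi *)
  ((forall (T : Type) (le : rel T), phi_continuous Phi le <-> phi_algebraic Phi le)
     <-> ~ Phi nat Peano.le) /\
  (~ Phi nat Peano.le <-> Psi nat Peano.le).
Proof.
  intros JP JQ SD.
  split; [intros X leX HX; exact (phi_dual_psiop_inf Phi Psi JP JQ SD leX (proj1 (proj1 HX))) |].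
  split; [exact (precomp_phi_dual Phi Psi JP JQ SD) |].
  split; [exact (psiop_dual_algebraic Phi Psi JP JQ SD) |].
  split; [exact (precomp_psiop_dual Phi Psi JP JQ SD) |].
  split; [exact (unit_is_iso Phi Psi JP JQ SD) |].
  split; [exact (counit_is_iso Phi Psi JP JQ SD) |].
  split.
  - split.
    + intros Hcts_alg HPhi.
      apply (leI_not_algebraic Phi JP HPhi), Hcts_alg, (leI_continuous Phi JP HPhi).
    + intros HnPhi T le. split.
      * intros Hcts. apply (continuous_algebraic Phi Psi JP JQ SD T le Hcts).
        apply (omega_in_psi Phi Psi JP JQ SD HnPhi).
      * apply (algebraic_continuous Phi JP T le).
  - split; [apply (omega_in_psi Phi Psi JP JQ SD) |].
    intros HPsi HPhi. apply (omega_not_in_both Phi Psi JP JQ SD HPsi HPhi).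
Qed.
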